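(* Let $z\in\mathbb D$, $0<R<1$, $0<L<1$, and suppose $\{z_1,\dots,z_k\}$ is an $L$-chain with respect to $\rho$ of the pseudohyperbolic disk $D(z,R)$. Then $$\frac{R^2}{1-R^2}\cdot\frac{1-L^2}{L^2}\le k\le\frac{(2R+L)^2}{1-R^2}\cdot\frac1{L^2}.$$
   Context: $\mathbb D$ open unit disk, $\rho(z,w)=|z-w|/|1-\bar wz|$, $D(z,R)=\{w\in\mathbb D:\rho(w,z)<R\}$. An $L$-chain of a subset $S$ w.r.t. $\rho$ is a maximal subset of $S$ whose distinct points are at $\rho$-distance $\ge L$. *)

From Stdlib Require Import Reals List.
From Coquelicot Require Import Coquelicot.
Open Scope R_scope.

Definition in_disk (z : C) : Prop := Cmod z < 1.

Definition rho (z w : C) : R :=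
  Cmod (Cminus z w) / Cmod (Cminus (RtoC 1) (Cmult (Cconj w) z)).

Definition pdisk (z : C) (r : R) (w : C) : Prop := in_disk w /\ rho w z < r.

Definition separated (L : R) (A : C -> Prop) : Prop :=
  forall u v, A u -> A v -> u <> v -> L <= rho u v.

Definition is_chain (L : R) (S A : C -> Prop) : Prop :=
  (forall w, A w -> S w) /\ separated L A /\
  (forall B : C -> Prop, (forall w, A w -> B w) -> (forall w, B w -> S w) ->
     separated L B -> forall w, B w -> A w).

(* The Cayley transform maps the disk onto the upper half-plane, and there a
   pseudohyperbolic disk D(a, r) is a Euclidean disk whose area for the invariant measure
   dx dy / y^2 is 4 PI r^2 / (1 - r^2), independently of a.  Maximality of the chain makes the disks
   D(z_j, L) cover D(z, R), which gives the lower bound.  Separation makes the disks D(z_j, L/2)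
   pairwise disjoint, and the strong triangle inequality
   rho(a, b) <= (rho(a, c) + rho(c, b)) / (1 + rho(a, c) rho(c, b))
   puts them inside D(z, s) with s = (L/2 + R) / (1 + L R / 2), which gives the upper bound.
   Areas are iterated Riemann integrals over a box containing all the disks involved. *)

From Stdlib Require Import Reals List.
From Coquelicot Require Import Coquelicot.
From Stdlib Require Import Lra Psatz Classical ClassicalEpsilon.
Open Scope R_scope.

(** * Pseudohyperbolic distance *)

Lemma Cmod_sqr (z : C) : Cmod z ^ 2 = fst z ^ 2 + snd z ^ 2.
Proof. exact (Cmod2_alt z). Qed.

Lemma rho_sym (a b : C) : rho a b = rho b a.
Proof.
  unfold rho, Cmod, Cminus, Cplus, Copp, Cmult, Cconj, RtoC; simpl.
  f_equal; f_equal; ring.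
Qed.

Lemma rho_same (a : C) : rho a a = 0.
Proof.
  unfold rho. replace (Cminus a a) with (RtoC 0) by (destruct a; unfold Cminus, Cplus, Copp, RtoC; simpl; f_equal; ring).
  rewrite Cmod_0. unfold Rdiv. ring.
Qed.

Lemma rho_ge0 (a b : C) : 0 <= rho a b.
Proof.
  unfold rho, Rdiv. apply Rmult_le_pos; [apply Cmod_ge_0|].
  destruct (Req_dec (Cmod (Cminus (RtoC 1) (Cmult (Cconj b) a))) 0) as [->|Hn].
  - rewrite Rinv_0. lra.
  - apply Rlt_le, Rinv_0_lt_compat. pose proof (Cmod_ge_0 (Cminus (RtoC 1) (Cmult (Cconj b) a))). lra.
Qed.

Lemma rho_den_num_identity (a b : C) :
  Cmod (Cminus (RtoC 1) (Cmult (Cconj b) a)) ^ 2 - Cmod (Cminus a b) ^ 2 =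
  (1 - Cmod a ^ 2) * (1 - Cmod b ^ 2).
Proof.
  rewrite !Cmod_sqr. destruct a as [u v], b as [p q].
  unfold Cminus, Cplus, Copp, Cmult, Cconj, RtoC; simpl. ring.
Qed.

Lemma rho_num_lt_den (a b : C) : in_disk a -> in_disk b ->
  Cmod (Cminus a b) < Cmod (Cminus (RtoC 1) (Cmult (Cconj b) a)).
Proof.
  unfold in_disk; intros Ha Hb.
  pose proof (rho_den_num_identity a b).
  pose proof (Cmod_ge_0 a). pose proof (Cmod_ge_0 b).
  pose proof (Cmod_ge_0 (Cminus a b)).
  pose proof (Cmod_ge_0 (Cminus (RtoC 1) (Cmult (Cconj b) a))).
  assert (0 < (1 - Cmod a ^ 2) * (1 - Cmod b ^ 2)) by (apply Rmult_lt_0_compat; nra).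
  nra.
Qed.

Lemma rho_den_pos (a b : C) : in_disk a -> in_disk b ->
  0 < Cmod (Cminus (RtoC 1) (Cmult (Cconj b) a)).
Proof.
  intros Ha Hb. pose proof (rho_num_lt_den a b Ha Hb). pose proof (Cmod_ge_0 (Cminus a b)). lra.
Qed.

Lemma rho_lt_1 (a b : C) : in_disk a -> in_disk b -> rho a b < 1.
Proof.
  intros Ha Hb. unfold rho. pose proof (rho_den_pos a b Ha Hb).
  apply Rlt_div_l; [lra|]. rewrite Rmult_1_l. now apply rho_num_lt_den.
Qed.

Lemma Rdiv_lt_Rdiv (a b c d : R) : 0 < b -> 0 < d -> a * d < c * b -> a / b < c / d.
Proof.
  intros Hb Hd H. apply (Rmult_lt_reg_r (b * d)); [nra|].
  replace (a / b * (b * d)) with (a * d) by (field; lra).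
  replace (c / d * (b * d)) with (c * b) by (field; lra).
  exact H.
Qed.

Definition mobius_add (x y : R) : R := (x + y) / (1 + x * y).

Lemma mobius_add_lt_mono (x y x' y' : R) :
  0 <= x -> x < x' -> x' < 1 -> 0 <= y -> y < y' -> y' < 1 ->
  mobius_add x y < mobius_add x' y'.
Proof.
  intros. unfold mobius_add. apply Rdiv_lt_Rdiv; [nra|nra|].
  (* the cross difference is (x' - x) (1 - y y') + (y' - y) (1 - x x') *)
  assert (0 < (x' - x) * (1 - y * y')) by (apply Rmult_lt_0_compat; nra).
  assert (0 <= (y' - y) * (1 - x * x')) by (apply Rmult_le_pos; nra).
  nra.
Qed.

Lemma mobius_add_le_add (x y : R) : 0 <= x -> 0 <= y -> mobius_add x y <= x + y.
Proof.
  intros. unfold mobius_add. apply Rle_div_l; nra.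
Qed.

Lemma mobius_add_bounds (x y : R) : 0 < x < 1 -> 0 < y < 1 -> 0 < mobius_add x y < 1.
Proof.
  intros Hx Hy. unfold mobius_add. split; [apply Rdiv_lt_0_compat; nra|].
  apply Rlt_div_l; nra.
Qed.

Lemma rho_le_mobius_add_Cmod (a b : C) : in_disk a -> in_disk b ->
  rho a b <= mobius_add (Cmod a) (Cmod b).
Proof.
  intros Ha Hb. unfold in_disk in *.
  pose proof (rho_den_pos a b Ha Hb) as Hm.
  pose proof (rho_den_num_identity a b) as Hid.
  assert (Hle : Cmod (Cminus (RtoC 1) (Cmult (Cconj b) a)) <= 1 + Cmod a * Cmod b).
  { eapply Rle_trans; [apply Cmod_triangle|].
    rewrite Cmod_opp, Cmod_mult, Cmod_conj, Cmod_1. lra. }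
  pose proof (Cmod_ge_0 a). pose proof (Cmod_ge_0 b). pose proof (Cmod_ge_0 (Cminus a b)).
  unfold rho, mobius_add.
  set (m := Cmod (Cminus (RtoC 1) (Cmult (Cconj b) a))) in *.
  set (n := Cmod (Cminus a b)) in *.
  set (p := Cmod a) in *. set (q := Cmod b) in *.
  apply Rle_div_l; [lra|]. unfold Rdiv. rewrite Rmult_assoc, (Rmult_comm (/ _)), <- Rmult_assoc.
  apply Rle_div_r; [nra|].
  (* with K = (1 - p^2)(1 - q^2): n^2 = m^2 - K and (p + q)^2 = (1 + p q)^2 - K *)
  assert (HK : 0 <= (1 - p ^ 2) * (1 - q ^ 2)) by (apply Rmult_le_pos; nra).
  assert (Hsq : (n * (1 + p * q)) ^ 2 <= ((p + q) * m) ^ 2).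
  { replace ((n * (1 + p * q)) ^ 2) with ((m ^ 2 - (1 - p ^ 2) * (1 - q ^ 2)) * (1 + p * q) ^ 2)
      by (rewrite <- Hid; ring).
    replace (((p + q) * m) ^ 2) with (m ^ 2 * ((1 + p * q) ^ 2 - (1 - p ^ 2) * (1 - q ^ 2))) by ring.
    assert (m ^ 2 <= (1 + p * q) ^ 2) by nra.
    nra. }
  assert (0 <= (p + q) * m) by nra.
  nra.
Qed.

Definition mobius (c w : C) : C := Cdiv (Cminus c w) (Cminus (RtoC 1) (Cmult (Cconj c) w)).

Lemma Cmod_pos_neq_0 (z : C) : 0 < Cmod z -> z <> RtoC 0.
Proof. intros H e. rewrite e, Cmod_0 in H. lra. Qed.

Lemma Cmod_Cminus_sym (a b : C) : Cmod (Cminus a b) = Cmod (Cminus b a).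
Proof. unfold Cmod, Cminus, Cplus, Copp; simpl; f_equal; ring. Qed.

Lemma Cmod_mobius (c a : C) : in_disk c -> in_disk a -> Cmod (mobius c a) = rho a c.
Proof.
  intros Hc Ha. unfold mobius, rho. rewrite Cmod_div, Cmod_Cminus_sym; [reflexivity|].
  now apply Cmod_pos_neq_0, rho_den_pos.
Qed.

Lemma mobius_in_disk (c a : C) : in_disk c -> in_disk a -> in_disk (mobius c a).
Proof. intros Hc Ha. unfold in_disk. rewrite Cmod_mobius by auto. now apply rho_lt_1. Qed.

Lemma rho_mobius (c a b : C) : in_disk c -> in_disk a -> in_disk b ->
  rho (mobius c a) (mobius c b) = rho a b.
Proof.
  intros Hc Ha Hb.
  set (da := Cminus (RtoC 1) (Cmult (Cconj c) a)).
  set (db := Cminus (RtoC 1) (Cmult (Cconj c) b)).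
  set (db' := Cminus (RtoC 1) (Cmult c (Cconj b))).
  set (k := Cminus (RtoC 1) (Cmult c (Cconj c))).
  assert (Hda : 0 < Cmod da) by (apply rho_den_pos; auto).
  assert (Hdb : 0 < Cmod db) by (apply rho_den_pos; auto).
  assert (Edb : Cmod db' = Cmod db).
  { unfold db, db', Cmod, Cminus, Cplus, Copp, Cmult, Cconj, RtoC; simpl; f_equal; ring. }
  assert (Hk : 0 < Cmod k).
  { unfold k. rewrite Cmult_comm. apply rho_den_pos; auto. }
  assert (Hda0 : da <> RtoC 0) by now apply Cmod_pos_neq_0.
  assert (Hdb0 : db <> RtoC 0) by now apply Cmod_pos_neq_0.
  assert (Hdb0' : db' <> RtoC 0) by (apply Cmod_pos_neq_0; now rewrite Edb).
  assert (Ed : Cminus (mobius c a) (mobius c b) = Cdiv (Cmult k (Cminus b a)) (Cmult da db)).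
  { unfold mobius, da, db, k. field. exact (conj Hdb0 Hda0). }
  assert (Econj : Cconj (mobius c b) = Cdiv (Cminus (Cconj c) (Cconj b)) db').
  { unfold mobius. rewrite Cdiv_conj by exact Hdb0.
    rewrite !Cminus_conj, Cmult_conj, Cconj_conj.
    replace (Cconj (RtoC 1)) with (RtoC 1) by (unfold Cconj, RtoC; simpl; f_equal; ring).
    reflexivity. }
  assert (En : Cminus (RtoC 1) (Cmult (Cconj (mobius c b)) (mobius c a)) =
               Cdiv (Cmult k (Cminus (RtoC 1) (Cmult (Cconj b) a))) (Cmult db' da)).
  { rewrite Econj. unfold mobius, da, db', k. field. exact (conj Hda0 Hdb0'). }
  unfold rho at 1. rewrite Ed, En.
  rewrite !Cmod_div by (apply Cmult_neq_0; assumption).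
  rewrite !Cmod_mult, Edb, (Cmod_Cminus_sym b a).
  pose proof (rho_den_pos a b Ha Hb).
  unfold rho. field. repeat split; lra.
Qed.

Lemma rho_triangle_strong (a b c : C) : in_disk a -> in_disk b -> in_disk c ->
  rho a b <= mobius_add (rho a c) (rho c b).
Proof.
  intros Ha Hb Hc. rewrite <- (rho_mobius c a b), (rho_sym c b) by auto.
  rewrite <- (Cmod_mobius c a), <- (Cmod_mobius c b) by auto.
  apply rho_le_mobius_add_Cmod; apply mobius_in_disk; auto.
Qed.

Lemma rho_triangle (a b c : C) : in_disk a -> in_disk b -> in_disk c ->
  rho a b <= rho a c + rho c b.
Proof.
  intros Ha Hb Hc. apply Rle_trans with (mobius_add (rho a c) (rho c b)).
  { now apply rho_triangle_strong. }
  apply mobius_add_le_add; apply rho_ge0.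
Qed.

Lemma pdisk_subset (z w p : C) (r s : R) : in_disk z -> in_disk w ->
  rho w z < s -> s < 1 -> r < 1 -> pdisk w r p -> pdisk z (mobius_add r s) p.
Proof.
  intros Hz Hw Hwz Hs Hr [Hp Hpw]. split; [exact Hp|].
  apply Rle_lt_trans with (mobius_add (rho p w) (rho w z)).
  - now apply rho_triangle_strong.
  - apply mobius_add_lt_mono; auto using rho_ge0.
Qed.

Lemma pdisk_half_disjoint (L : R) (u v p : C) : in_disk u -> in_disk v ->
  L <= rho u v -> pdisk u (L / 2) p -> ~ pdisk v (L / 2) p.
Proof.
  intros Hu Hv Huv [Hp Hpu] [_ Hpv].
  pose proof (rho_triangle u v p Hu Hv Hp). rewrite (rho_sym u p) in *. lra.
Qed.

Lemma chain_covers (L : R) (S A : C -> Prop) (p : C) : 0 < L ->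
  is_chain L S A -> S p -> exists w, A w /\ rho p w < L.
Proof.
  intros HL [HAS [Hsep Hmax]] Hp. apply NNPP. intros Hfar.
  assert (Hpw : forall w, A w -> L <= rho p w).
  { intros w Hw. apply Rnot_lt_le. intros Hlt. apply Hfar. now exists w. }
  assert (HpA : A p).
  { apply (Hmax (fun w => A w \/ w = p)); [now left | | | now right].
    - intros w [Hw | ->]; auto.
    - intros u v [Hu | ->] [Hv | ->] Huv; auto.
      + rewrite rho_sym. auto.
      + contradiction. }
  pose proof (Hpw p HpA). rewrite rho_same in *. lra.
Qed.

(** * The Cayley transform onto the upper half-plane *)

(* [cayley x y] is (ζ - i) / (ζ + i) with ζ = x + i y; the inverse sends a to
   ζ = i (1 + a) / (1 - a), whose coordinates are [cayley_inv_x a] and [cayley_inv_y a]. *)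
Definition cayley (x y : R) : C :=
  ((x * x + y * y - 1) / (x * x + (y + 1) ^ 2), -2 * x / (x * x + (y + 1) ^ 2)).

Definition cayley_inv_den (a : C) : R := (1 - fst a) ^ 2 + snd a ^ 2.

Definition cayley_inv_x (a : C) : R := -2 * snd a / cayley_inv_den a.

Definition cayley_inv_y (a : C) : R := (1 - fst a ^ 2 - snd a ^ 2) / cayley_inv_den a.

Lemma cayley_in_disk (x y : R) : 0 < y -> in_disk (cayley x y).
Proof.
  intros Hy. unfold in_disk.
  assert (HE : 0 < x * x + (y + 1) ^ 2) by nra.
  assert (Cmod (cayley x y) ^ 2 < 1).
  { rewrite Cmod_sqr. unfold cayley; cbn [fst snd].
    replace (((x * x + y * y - 1) / (x * x + (y + 1) ^ 2)) ^ 2 + (-2 * x / (x * x + (y + 1) ^ 2)) ^ 2)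
      with ((x * x + (y - 1) ^ 2) / (x * x + (y + 1) ^ 2)) by (field; lra).
    apply Rlt_div_l; [exact HE | nra]. }
  pose proof (Cmod_ge_0 (cayley x y)). nra.
Qed.

Lemma cayley_inv_den_pos (a : C) : in_disk a -> 0 < cayley_inv_den a.
Proof.
  unfold in_disk, cayley_inv_den; intros H.
  pose proof (Cmod_sqr a). pose proof (Cmod_ge_0 a). destruct a as [u v]; simpl in *.
  assert (u ^ 2 + v ^ 2 < 1) by nra. nra.
Qed.

Lemma cayley_inv_y_pos (a : C) : in_disk a -> 0 < cayley_inv_y a.
Proof.
  intros H. pose proof (cayley_inv_den_pos a H). unfold in_disk in H.
  pose proof (Cmod_sqr a). pose proof (Cmod_ge_0 a).
  unfold cayley_inv_y. apply Rdiv_lt_0_compat; nra.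
Qed.

Lemma Cmod_cayley_sub_sqr (a : C) (x y : R) : in_disk a -> 0 < y ->
  Cmod (Cminus (cayley x y) a) ^ 2 =
  ((x - cayley_inv_x a) ^ 2 + (y - cayley_inv_y a) ^ 2) *
  (cayley_inv_den a / (x * x + (y + 1) ^ 2)).
Proof.
  intros Ha Hy. pose proof (cayley_inv_den_pos a Ha) as HD.
  assert (0 < x * x + (y + 1) ^ 2) by nra.
  rewrite Cmod_sqr. revert HD.
  unfold cayley_inv_x, cayley_inv_y, cayley_inv_den, cayley. destruct a as [u v].
  unfold Cminus, Cplus, Copp; simpl. intros HD. field. lra.
Qed.

Lemma Cmod_cayley_den_sqr (a : C) (x y : R) : in_disk a -> 0 < y ->
  Cmod (Cminus (RtoC 1) (Cmult (Cconj a) (cayley x y))) ^ 2 =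
  ((x - cayley_inv_x a) ^ 2 + (y + cayley_inv_y a) ^ 2) *
  (cayley_inv_den a / (x * x + (y + 1) ^ 2)).
Proof.
  intros Ha Hy. pose proof (cayley_inv_den_pos a Ha) as HD.
  assert (0 < x * x + (y + 1) ^ 2) by nra.
  rewrite Cmod_sqr. revert HD.
  unfold cayley_inv_x, cayley_inv_y, cayley_inv_den, cayley. destruct a as [u v].
  unfold Cminus, Cplus, Copp, Cmult, Cconj, RtoC; simpl. intros HD. field. lra.
Qed.

Lemma rho_cayley_sqr (a : C) (x y : R) : in_disk a -> 0 < y ->
  rho (cayley x y) a ^ 2 =
  ((x - cayley_inv_x a) ^ 2 + (y - cayley_inv_y a) ^ 2) /
  ((x - cayley_inv_x a) ^ 2 + (y + cayley_inv_y a) ^ 2).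
Proof.
  intros Ha Hy. pose proof (cayley_inv_den_pos a Ha) as HD.
  pose proof (cayley_inv_y_pos a Ha) as Hb.
  assert (0 < x * x + (y + 1) ^ 2) by nra.
  assert (0 < (x - cayley_inv_x a) ^ 2 + (y + cayley_inv_y a) ^ 2).
  { pose proof (pow2_ge_0 (x - cayley_inv_x a)). pose proof (pow_lt (y + cayley_inv_y a) 2). lra. }
  unfold rho. unfold Rdiv at 1. rewrite Rpow_mult_distr, pow_inv.
  rewrite Cmod_cayley_sub_sqr, Cmod_cayley_den_sqr by assumption.
  field. repeat split; lra.
Qed.

Definition hcenter (b r : R) : R := b * (1 + r ^ 2) / (1 - r ^ 2).

Definition hradius (b r : R) : R := 2 * r * b / (1 - r ^ 2).

Lemma apollonius_circle (al b r x y : R) : 0 < b -> 0 < r < 1 -> 0 < y ->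
  ((x - al) ^ 2 + (y - b) ^ 2) / ((x - al) ^ 2 + (y + b) ^ 2) < r ^ 2 <->
  (x - al) ^ 2 + (y - hcenter b r) ^ 2 < hradius b r ^ 2.
Proof.
  intros Hb Hr Hy.
  assert (Hr2 : 0 < 1 - r ^ 2) by nra.
  assert (HD : 0 < (x - al) ^ 2 + (y + b) ^ 2).
  { pose proof (pow2_ge_0 (x - al)). pose proof (pow_lt (y + b) 2). lra. }
  assert (E : (x - al) ^ 2 + (y - b) ^ 2 - r ^ 2 * ((x - al) ^ 2 + (y + b) ^ 2) =
     ((x - al) ^ 2 + (y - hcenter b r) ^ 2 - hradius b r ^ 2) * (1 - r ^ 2)).
  { unfold hcenter, hradius. field. lra. }
  rewrite Rlt_div_l by lra. split; intros H; nra.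
Qed.

Lemma pdisk_cayley (a : C) (r x y : R) : in_disk a -> 0 < r < 1 -> 0 < y ->
  pdisk a r (cayley x y) <->
  (x - cayley_inv_x a) ^ 2 + (y - hcenter (cayley_inv_y a) r) ^ 2 < hradius (cayley_inv_y a) r ^ 2.
Proof.
  intros Ha Hr Hy.
  rewrite <- apollonius_circle, <- rho_cayley_sqr by auto using cayley_inv_y_pos.
  pose proof (rho_ge0 (cayley x y) a). unfold pdisk.
  split; [intros [_ Hlt]; nra | intros Hlt; split; [now apply cayley_in_disk | nra]].
Qed.

(** * Hyperbolic area of a Euclidean disk in the upper half-plane *)

Lemma is_RInt_eq (f : R -> R) (a b l l' : R) : is_RInt f a b l -> l = l' -> is_RInt f a b l'.
Proof. now intros H <-. Qed.

Lemma is_RInt_zero (f : R -> R) (a b : R) :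
  a <= b -> (forall y, a < y < b -> f y = 0) -> is_RInt f a b 0.
Proof.
  intros Hab Hf. apply is_RInt_ext with (fun _ => 0).
  - rewrite Rmin_left, Rmax_right by lra. intros y Hy. now rewrite Hf.
  - eapply is_RInt_eq; [apply is_RInt_const|]. unfold scal; simpl; unfold mult; simpl; ring.
Qed.

Lemma is_RInt_supported (f : R -> R) (a u v b I : R) :
  a <= u -> u <= v -> v <= b ->
  (forall y, a < y < u -> f y = 0) -> (forall y, v < y < b -> f y = 0) ->
  is_RInt f u v I -> is_RInt f a b I.
Proof.
  intros Hau Huv Hvb Hl Hr HI. eapply is_RInt_eq.
  - apply is_RInt_Chasles with v; [apply is_RInt_Chasles with u|]; eauto using is_RInt_zero.
  - unfold plus; simpl; ring.
Qed.

Lemma is_RInt_inv_sqr (u v : R) : 0 < u <= v -> is_RInt (fun y => / y ^ 2) u v (/ u - / v).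
Proof.
  intros Huv. eapply is_RInt_eq; [apply (is_RInt_derive (fun y => - / y))|].
  - intros y Hy. rewrite Rmin_left, Rmax_right in Hy by lra.
    auto_derive; [lra|]. field. lra.
  - intros y Hy. rewrite Rmin_left, Rmax_right in Hy by lra.
    apply (@ex_derive_continuous R_AbsRing R_NormedModule). auto_derive. nra.
  - unfold minus, plus, opp; simpl. ring.
Qed.

Definition disk_ind (al c s x y : R) : R :=
  if Rlt_dec ((x - al) ^ 2 + (y - c) ^ 2) (s ^ 2) then 1 else 0.

Definition chord_half (al s x : R) : R := sqrt (s ^ 2 - (x - al) ^ 2).

Definition chord_weight (al c s x : R) : R := / (c - chord_half al s x) - / (c + chord_half al s x).

Lemma disk_chord_iff (al c s x y : R) :
  (x - al) ^ 2 + (y - c) ^ 2 < s ^ 2 <-> Rabs (y - c) < chord_half al s x.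
Proof.
  unfold chord_half. pose proof (Rabs_pos (y - c)). rewrite <- (pow2_abs (y - c)).
  destruct (Rle_lt_dec (s ^ 2 - (x - al) ^ 2) 0) as [Hd|Hd].
  - rewrite sqrt_neg_0 by exact Hd. pose proof (pow2_ge_0 (Rabs (y - c))). split; intros; lra.
  - pose proof (sqrt_pos (s ^ 2 - (x - al) ^ 2)).
    pose proof (pow2_sqrt (s ^ 2 - (x - al) ^ 2) ltac:(lra)). split; intros; nra.
Qed.

Lemma chord_half_bounds (al s x : R) : 0 <= s -> 0 <= chord_half al s x <= s.
Proof.
  intros Hs. unfold chord_half. split; [apply sqrt_pos|].
  rewrite <- (sqrt_pow2 s Hs) at 2. apply sqrt_le_1_alt. pose proof (pow2_ge_0 (x - al)). lra.
Qed.

Lemma is_RInt_disk_ind (al c s x Y1 Y2 : R) : 0 <= s -> 0 < Y1 -> Y1 <= c - s -> c + s <= Y2 ->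
  is_RInt (fun y => disk_ind al c s x y / y ^ 2) Y1 Y2 (chord_weight al c s x).
Proof.
  intros Hs HY1 H1 H2. pose proof (chord_half_bounds al s x Hs) as Hh.
  set (h := chord_half al s x) in *.
  assert (Hout : forall y, ~ Rabs (y - c) < h -> disk_ind al c s x y / y ^ 2 = 0).
  { intros y Hy. unfold disk_ind. destruct (Rlt_dec _ _) as [Hin|]; [|unfold Rdiv; ring].
    now apply disk_chord_iff in Hin. }
  apply is_RInt_supported with (c - h) (c + h); try lra.
  - intros y Hy. apply Hout. unfold Rabs. destruct (Rcase_abs _); lra.
  - intros y Hy. apply Hout. unfold Rabs. destruct (Rcase_abs _); lra.
  - apply is_RInt_ext with (fun y => / y ^ 2).
    + rewrite Rmin_left, Rmax_right by lra. intros y Hy. unfold disk_ind.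
      destruct (Rlt_dec _ _) as [|Hn]; [unfold Rdiv; now rewrite Rmult_1_l|].
      exfalso. apply Hn, disk_chord_iff. fold h. unfold Rabs. destruct (Rcase_abs _); lra.
    + apply is_RInt_inv_sqr. lra.
Qed.

(* Equal to [atan (T * tan t)] on (-PI/2, PI/2), but smooth on all of R. *)
Definition atan_scaled_tan (T t : R) : R :=
  t + atan ((T - 1) * sin t * cos t / (cos t ^ 2 + T * sin t ^ 2)).

Lemma cos_sqr_add_sin_sqr_pos (T t : R) : 0 < T -> 0 < cos t ^ 2 + T * sin t ^ 2.
Proof.
  intros HT. pose proof (sin2_cos2 t). unfold Rsqr in *.
  pose proof (pow2_ge_0 (sin t)). pose proof (pow2_ge_0 (cos t)). nra.
Qed.

Lemma is_derive_atan_scaled_tan (T t : R) : 0 < T ->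
  is_derive (atan_scaled_tan T) t (T / (cos t ^ 2 + T ^ 2 * sin t ^ 2)).
Proof.
  intros HT. pose proof (cos_sqr_add_sin_sqr_pos T t HT).
  pose proof (cos_sqr_add_sin_sqr_pos (T ^ 2) t ltac:(nra)).
  (* in this homogeneous form the derivative is a rational identity in sin t and cos t *)
  replace T with (T * (cos t ^ 2 + sin t ^ 2)) at 2
    by (rewrite Rplus_comm, <- !Rsqr_pow2, sin2_cos2; ring).
  unfold atan_scaled_tan. auto_derive; [lra|].
  field. split; [lra|]. nra.
Qed.

Lemma is_RInt_chord_weight_angle (T : R) : 0 < T ->
  is_RInt (fun t => 2 * T ^ 2 / (cos t ^ 2 + T ^ 2 * sin t ^ 2) - 2)
    (-(PI / 2)) (PI / 2) (2 * PI * (T - 1)).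
Proof.
  intros HT. assert (HT2 : 0 < T ^ 2) by nra.
  eapply is_RInt_eq.
  - apply (is_RInt_derive (fun t => 2 * T * atan_scaled_tan T t - 2 * t)).
    + intros t _. pose proof (is_derive_atan_scaled_tan T t HT) as Hd.
      pose proof (cos_sqr_add_sin_sqr_pos (T ^ 2) t HT2).
      auto_derive; [now exists (T / (cos t ^ 2 + T ^ 2 * sin t ^ 2))|].
      replace (Derive (fun x : R => atan_scaled_tan T x) t) with (T / (cos t ^ 2 + T ^ 2 * sin t ^ 2))
        by (symmetry; now apply is_derive_unique).
      field. lra.
    + intros t _. apply (@ex_derive_continuous R_AbsRing R_NormedModule).
      pose proof (cos_sqr_add_sin_sqr_pos (T ^ 2) t HT2). auto_derive. lra.
  - unfold minus, plus, opp; simpl. unfold atan_scaled_tan.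
    rewrite sin_neg, cos_neg, sin_PI2, cos_PI2.
    replace ((T - 1) * 1 * 0 / (0 ^ 2 + T * 1 ^ 2)) with 0 by (field; lra).
    replace ((T - 1) * - (1) * 0 / (0 ^ 2 + T * (- (1)) ^ 2)) with 0 by (field; lra).
    rewrite atan_0. field.
Qed.

Lemma chord_half_sin (al s t : R) : 0 <= s -> -(PI / 2) <= t <= PI / 2 ->
  chord_half al s (al + s * sin t) = s * cos t.
Proof.
  intros Hs Ht. unfold chord_half.
  assert (Hsc : cos t ^ 2 = 1 - sin t ^ 2) by (pose proof (sin2_cos2 t); unfold Rsqr in *; nra).
  transitivity (sqrt ((s * cos t) ^ 2)); [f_equal; rewrite Rpow_mult_distr, Hsc; ring|].
  apply sqrt_pow2, Rmult_le_pos; [exact Hs|]. apply cos_ge_0; lra.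
Qed.

Lemma continuous_chord_weight (al c s x : R) : 0 <= s < c -> continuous (chord_weight al c s) x.
Proof.
  intros Hs. pose proof (chord_half_bounds al s x ltac:(lra)).
  assert (Hh : continuous (chord_half al s) x).
  { apply continuous_sqrt_comp, (@ex_derive_continuous R_AbsRing R_NormedModule). auto_derive. auto. }
  unfold chord_weight.
  apply (continuous_minus (fun x => / (c - chord_half al s x)) (fun x => / (c + chord_half al s x)));
    apply continuous_Rinv_comp; try lra;
    [apply (continuous_minus (fun _ => c)) | apply (continuous_plus (fun _ => c))];
    auto using continuous_const.
Qed.

Lemma chord_weight_sin (al b c s t : R) : 0 < b -> 0 < s -> 0 < c -> c ^ 2 = b ^ 2 + s ^ 2 ->
  -(PI / 2) <= t <= PI / 2 ->
  s * cos t * chord_weight al c s (al + s * sin t) =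
  2 * (c / b) ^ 2 / (cos t ^ 2 + (c / b) ^ 2 * sin t ^ 2) - 2.
Proof.
  intros Hb Hs Hc Hcbs Ht. unfold chord_weight. rewrite chord_half_sin by lra.
  assert (Hsn : sin t ^ 2 = 1 - cos t ^ 2) by (pose proof (sin2_cos2 t); unfold Rsqr in *; nra).
  pose proof (COS_bound t). pose proof (cos_ge_0 t ltac:(lra) ltac:(lra)).
  assert (Hsc : s < c) by nra.
  assert (Hden : 0 < c ^ 2 - s ^ 2 * cos t ^ 2) by nra.
  transitivity (2 * c ^ 2 / (c ^ 2 - s ^ 2 * cos t ^ 2) - 2); [field; nra|].
  replace (c ^ 2 - s ^ 2 * cos t ^ 2) with (b ^ 2 * cos t ^ 2 + c ^ 2 * sin t ^ 2)
    by (rewrite Hsn; nra).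
  field. split; [lra|]. rewrite !Rpow_mult_distr, Hsn. nra.
Qed.

Lemma is_RInt_chord_weight (al b c s X1 X2 : R) :
  0 < b -> 0 < s -> 0 < c -> c ^ 2 = b ^ 2 + s ^ 2 -> X1 <= al - s -> al + s <= X2 ->
  is_RInt (chord_weight al c s) X1 X2 (2 * PI * (c / b - 1)).
Proof.
  intros Hb Hs Hc Hcbs H1 H2.
  assert (Hsc : 0 <= s < c) by nra.
  assert (Hout : forall x, s ^ 2 < (x - al) ^ 2 -> chord_weight al c s x = 0).
  { intros x Hx. unfold chord_weight, chord_half. rewrite sqrt_neg_0 by lra. rewrite Rminus_0_r, Rplus_0_r. ring. }
  pose proof PI_RGT_0.
  apply is_RInt_supported with (al - s) (al + s); try lra.
  - intros x Hx. apply Hout. nra.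
  - intros x Hx. apply Hout. nra.
  - assert (Hcomp : is_RInt (fun t => scal (s * cos t) (chord_weight al c s (al + s * sin t)))
              (-(PI / 2)) (PI / 2) (RInt (chord_weight al c s) (al - s) (al + s))).
    { replace (al - s) with (al + s * sin (-(PI / 2))) by (rewrite sin_neg, sin_PI2; ring).
      replace (al + s) with (al + s * sin (PI / 2)) by (rewrite sin_PI2; ring).
      apply (@is_RInt_comp R_CompleteNormedModule _ (fun t => al + s * sin t) (fun t => s * cos t)).
      - intros t _. now apply continuous_chord_weight.
      - intros t _. split; [auto_derive; auto; ring|].
        apply (@ex_derive_continuous R_AbsRing R_NormedModule). auto_derive. auto. }
    assert (Hval : RInt (chord_weight al c s) (al - s) (al + s) = 2 * PI * (c / b - 1)).
    { rewrite <- (is_RInt_unique _ _ _ _ Hcomp). apply is_RInt_unique.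
      apply is_RInt_ext with (fun t => 2 * (c / b) ^ 2 / (cos t ^ 2 + (c / b) ^ 2 * sin t ^ 2) - 2).
      - rewrite Rmin_left, Rmax_right by lra. intros t Ht. symmetry.
        apply chord_weight_sin; auto. lra.
      - apply is_RInt_chord_weight_angle. now apply Rdiv_lt_0_compat. }
    rewrite <- Hval. apply (@RInt_correct R_CompleteNormedModule), ex_RInt_continuous.
    intros x _. now apply continuous_chord_weight.
Qed.

Definition is_RInt2 (f : R -> R -> R) (X1 X2 Y1 Y2 v : R) : Prop :=
  (forall x, ex_RInt (f x) Y1 Y2) /\ is_RInt (fun x => RInt (f x) Y1 Y2) X1 X2 v.

Lemma is_RInt2_ext (f g : R -> R -> R) (X1 X2 Y1 Y2 v : R) :
  (forall x y, Y1 < y < Y2 -> f x y = g x y) -> Y1 <= Y2 ->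
  is_RInt2 f X1 X2 Y1 Y2 v -> is_RInt2 g X1 X2 Y1 Y2 v.
Proof.
  intros Hfg HY [Hfx Hf].
  assert (Hx : forall x y, Rmin Y1 Y2 < y < Rmax Y1 Y2 -> f x y = g x y).
  { rewrite Rmin_left, Rmax_right by lra. auto. }
  split.
  - intros x. apply (ex_RInt_ext (f x)); auto.
  - apply is_RInt_ext with (fun x => RInt (f x) Y1 Y2); [|exact Hf].
    intros x _. apply RInt_ext. auto.
Qed.

Lemma is_RInt2_le (f g : R -> R -> R) (X1 X2 Y1 Y2 vf vg : R) :
  X1 <= X2 -> Y1 <= Y2 -> is_RInt2 f X1 X2 Y1 Y2 vf -> is_RInt2 g X1 X2 Y1 Y2 vg ->
  (forall x y, X1 < x < X2 -> Y1 < y < Y2 -> f x y <= g x y) -> vf <= vg.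
Proof.
  intros HX HY [Hfx Hf] [Hgx Hg] Hfg.
  apply (is_RInt_le _ _ X1 X2 _ _ HX Hf Hg). intros x Hx.
  apply (is_RInt_le (f x) (g x) Y1 Y2); [exact HY| | |intros y Hy; apply Hfg; lra];
    apply (@RInt_correct R_CompleteNormedModule); auto.
Qed.

Lemma is_RInt2_disk_ind (al b c s X1 X2 Y1 Y2 : R) :
  0 < b -> 0 < s -> 0 < c -> c ^ 2 = b ^ 2 + s ^ 2 ->
  X1 <= al - s -> al + s <= X2 -> 0 < Y1 -> Y1 <= c - s -> c + s <= Y2 ->
  is_RInt2 (fun x y => disk_ind al c s x y / y ^ 2) X1 X2 Y1 Y2 (2 * PI * (c / b - 1)).
Proof.
  intros Hb Hs Hc Hcbs HX1 HX2 HY1 HY1' HY2.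
  assert (Hin : forall x, is_RInt (fun y => disk_ind al c s x y / y ^ 2) Y1 Y2 (chord_weight al c s x))
    by (intros x; apply is_RInt_disk_ind; lra).
  split; [intros x; eexists; apply Hin|].
  apply is_RInt_ext with (chord_weight al c s).
  - intros x _. symmetry. now apply is_RInt_unique.
  - now apply is_RInt_chord_weight.
Qed.

(** * Counting points by hyperbolic area *)

Definition sumf {A : Type} (l : list A) (f : A -> R) : R := fold_right (fun w acc => f w + acc) 0 l.

Lemma sumf_const {A : Type} (l : list A) (k : R) : sumf l (fun _ => k) = INR (length l) * k.
Proof.
  unfold sumf. induction l as [|w l IH]; [simpl; ring|].
  cbn [fold_right length]. rewrite IH, S_INR. ring.
Qed.

Lemma sumf_nonneg {A : Type} (l : list A) (f : A -> R) :
  (forall w, In w l -> 0 <= f w) -> 0 <= sumf l f.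
Proof.
  induction l as [|w l IH]; simpl; intros Hf; [lra|].
  pose proof (Hf w (or_introl eq_refl)). assert (0 <= sumf l f) by (apply IH; auto). lra.
Qed.

Lemma sumf_ge_elem {A : Type} (l : list A) (f : A -> R) (w : A) :
  (forall u, In u l -> 0 <= f u) -> In w l -> f w <= sumf l f.
Proof.
  induction l as [|u l IH]; simpl; intros Hf Hw; [contradiction|].
  assert (0 <= f u) by auto.
  assert (0 <= sumf l f) by (apply sumf_nonneg; auto).
  destruct Hw as [<- | Hw]; [lra|].
  assert (f w <= sumf l f) by (apply IH; auto). lra.
Qed.

Lemma sumf_div {A : Type} (l : list A) (f : A -> R) (d : R) :
  sumf l (fun w => f w / d) = sumf l f / d.
Proof. induction l as [|w l IH]; simpl; [unfold Rdiv; ring|]. rewrite IH. unfold Rdiv. ring. Qed.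

Lemma is_RInt2_sumf {A : Type} (l : list A) (F : A -> R -> R -> R) (v : A -> R) (X1 X2 Y1 Y2 : R) :
  (forall w, In w l -> is_RInt2 (F w) X1 X2 Y1 Y2 (v w)) ->
  is_RInt2 (fun x y => sumf l (fun w => F w x y)) X1 X2 Y1 Y2 (sumf l v).
Proof.
  induction l as [|w l IH]; intros HF; simpl.
  - assert (H0 : forall a b, is_RInt (fun _ => 0) a b 0).
    { intros a b. eapply is_RInt_eq; [apply is_RInt_const|].
      unfold scal; simpl; unfold mult; simpl; ring. }
    split; [intros x; eexists; apply H0|].
    apply is_RInt_ext with (fun _ => 0); [|apply H0].
    intros x _. symmetry. apply is_RInt_unique, H0.
  - destruct (HF w (or_introl eq_refl)) as [Hwx Hw].
    destruct IH as [Hlx Hl]; [intros u Hu; apply HF; now right|].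
    split.
    + intros x. apply (ex_RInt_plus (F w x) (fun y => sumf l (fun u => F u x y))); auto.
    + eapply is_RInt_ext; [|apply (is_RInt_plus _ _ _ _ _ _ Hw Hl)].
      intros x _. symmetry. apply is_RInt_unique.
      apply (is_RInt_plus (F w x) (fun y => sumf l (fun u => F u x y)));
        apply (@RInt_correct R_CompleteNormedModule); auto.
Qed.

Definition indic (P : Prop) : R := if excluded_middle_informative P then 1 else 0.

Lemma indic_true (P : Prop) : P -> indic P = 1.
Proof. intros HP. unfold indic. now destruct (excluded_middle_informative P). Qed.

Lemma indic_false (P : Prop) : ~ P -> indic P = 0.
Proof. intros HP. unfold indic. now destruct (excluded_middle_informative P). Qed.

Lemma indic_nonneg (P : Prop) : 0 <= indic P.
Proof. unfold indic. destruct (excluded_middle_informative P); lra. Qed.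

Lemma indic_le_sumf {A : Type} (P : Prop) (Q : A -> Prop) (l : list A) :
  (P -> exists w, In w l /\ Q w) -> indic P <= sumf l (fun w => indic (Q w)).
Proof.
  intros Hcov. unfold indic at 1. destruct (excluded_middle_informative P) as [HP|HP].
  - destruct (Hcov HP) as (w & Hw & HQ). rewrite <- (indic_true (Q w) HQ).
    apply (sumf_ge_elem l (fun w => indic (Q w))); auto using indic_nonneg.
  - apply sumf_nonneg. auto using indic_nonneg.
Qed.

Lemma sumf_indic_le {A : Type} (P : Prop) (Q : A -> Prop) (l : list A) : NoDup l ->
  (forall w, In w l -> Q w -> P) ->
  (forall u v, In u l -> In v l -> u <> v -> Q u -> ~ Q v) ->
  sumf l (fun w => indic (Q w)) <= indic P.
Proof.
  revert P. induction l as [|w l IH]; intros P Hnd HP Hdisj; simpl.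
  - apply indic_nonneg.
  - inversion Hnd as [|? ? Hwl Hndl]; subst.
    destruct (excluded_middle_informative (Q w)) as [HQ|HQ].
    + (* Q fails on the rest of the list, so the tail is bounded by indic False = 0 *)
      assert (Hl : sumf l (fun w => indic (Q w)) <= indic False).
      { apply IH; auto.
        - intros v Hv HQv. apply (Hdisj w v); auto; [now left | now right | congruence].
        - intros u v Hu Hv. apply Hdisj; now right. }
      rewrite indic_false in Hl by tauto.
      rewrite indic_true, (indic_true P) by eauto using in_eq. lra.
    + rewrite indic_false by exact HQ.
      assert (sumf l (fun w => indic (Q w)) <= indic P).
      { apply IH; auto.
        - intros v Hv. apply HP. now right.
        - intros u v Hu Hv. apply Hdisj; now right. }
      lra.
Qed.

Definition harea (r : R) : R := 4 * PI * (r ^ 2 / (1 - r ^ 2)).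

Lemma harea_pos (r : R) : 0 < r < 1 -> 0 < harea r.
Proof.
  intros Hr. unfold harea. pose proof PI_RGT_0.
  apply Rmult_lt_0_compat; [lra|]. apply Rdiv_lt_0_compat; nra.
Qed.

Section HyperbolicDisk.

Variables (b r : R).
Hypotheses (Hb : 0 < b) (Hr : 0 < r < 1).

Lemma hradius_pos : 0 < hradius b r.
Proof. unfold hradius. apply Rdiv_lt_0_compat; nra. Qed.

Lemma hcenter_sub_hradius_pos : 0 < hcenter b r - hradius b r.
Proof.
  unfold hcenter, hradius.
  replace (b * (1 + r ^ 2) / (1 - r ^ 2) - 2 * r * b / (1 - r ^ 2)) with (b * (1 - r) ^ 2 / (1 - r ^ 2))
    by (field; nra).
  apply Rdiv_lt_0_compat; [apply Rmult_lt_0_compat; [lra | apply pow_lt; lra] | nra].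
Qed.

Lemma hcenter_sqr : hcenter b r ^ 2 = b ^ 2 + hradius b r ^ 2.
Proof. unfold hcenter, hradius. field. nra. Qed.

Lemma harea_hcenter : 2 * PI * (hcenter b r / b - 1) = harea r.
Proof. unfold hcenter, harea. field. split; nra. Qed.

End HyperbolicDisk.

Lemma harea_mobius_add (x y : R) : 0 < x < 1 -> 0 < y < 1 ->
  harea (mobius_add x y) = 4 * PI * ((x + y) ^ 2 / ((1 - x ^ 2) * (1 - y ^ 2))).
Proof.
  intros Hx Hy. unfold harea, mobius_add.
  assert (E : (1 + x * y) ^ 2 - (x + y) ^ 2 = (1 - x ^ 2) * (1 - y ^ 2)) by ring.
  assert (0 < (1 - x ^ 2) * (1 - y ^ 2)) by (apply Rmult_lt_0_compat; nra).
  field. rewrite E. repeat split; nra.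
Qed.

Lemma harea_div (r s : R) : 0 < r < 1 -> 0 < s < 1 ->
  harea r / harea s = r ^ 2 / (1 - r ^ 2) * ((1 - s ^ 2) / s ^ 2).
Proof. intros Hr Hs. pose proof PI_RGT_0. unfold harea. field. repeat split; nra. Qed.

Lemma harea_mobius_add_half_div (r L : R) : 0 < r < 1 -> 0 < L < 1 ->
  harea (mobius_add (L / 2) r) / harea (L / 2) = (2 * r + L) ^ 2 / (1 - r ^ 2) * (1 / L ^ 2).
Proof.
  intros Hr HL. pose proof PI_RGT_0.
  rewrite harea_mobius_add by lra. unfold harea. field. repeat split; nra.
Qed.

Definition pdisk_in_box (a : C) (r X1 X2 Y1 Y2 : R) : Prop :=
  X1 <= cayley_inv_x a - hradius (cayley_inv_y a) r /\
  cayley_inv_x a + hradius (cayley_inv_y a) r <= X2 /\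
  Y1 <= hcenter (cayley_inv_y a) r - hradius (cayley_inv_y a) r /\
  hcenter (cayley_inv_y a) r + hradius (cayley_inv_y a) r <= Y2.

Lemma is_RInt2_pdisk (a : C) (r X1 X2 Y1 Y2 : R) : in_disk a -> 0 < r < 1 -> 0 < Y1 ->
  pdisk_in_box a r X1 X2 Y1 Y2 ->
  is_RInt2 (fun x y => indic (pdisk a r (cayley x y)) / y ^ 2) X1 X2 Y1 Y2 (harea r).
Proof.
  intros Ha Hr HY1 (HX1 & HX2 & HY1' & HY2).
  pose proof (cayley_inv_y_pos a Ha) as Hb.
  pose proof (hradius_pos _ _ Hb Hr). pose proof (hcenter_sub_hradius_pos _ _ Hb Hr).
  rewrite <- (harea_hcenter (cayley_inv_y a) r) by auto.
  apply is_RInt2_ext with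
    (fun x y => disk_ind (cayley_inv_x a) (hcenter (cayley_inv_y a) r) (hradius (cayley_inv_y a) r) x y / y ^ 2);
    [| lra | apply is_RInt2_disk_ind; auto using hcenter_sqr; lra].
  intros x y Hy. unfold disk_ind, indic.
  destruct (Rlt_dec _ _) as [Hin|Hout]; destruct (excluded_middle_informative _) as [Hp|Hp]; auto.
  - exfalso. apply Hp, pdisk_cayley; auto. lra.
  - exfalso. apply Hout, pdisk_cayley; auto. lra.
Qed.

Lemma pdisk_in_box_widen (a : C) (r X1 X2 Y1 Y2 X1' X2' Y1' Y2' : R) :
  X1' <= X1 -> X2 <= X2' -> Y1' <= Y1 -> Y2 <= Y2' ->
  pdisk_in_box a r X1 X2 Y1 Y2 -> pdisk_in_box a r X1' X2' Y1' Y2'.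
Proof. unfold pdisk_in_box. lra. Qed.

Lemma pdisk_in_some_box (a : C) (r : R) : in_disk a -> 0 < r < 1 ->
  exists X1 X2 Y1 Y2, 0 < Y1 /\ pdisk_in_box a r X1 X2 Y1 Y2.
Proof.
  intros Ha Hr. pose proof (hcenter_sub_hradius_pos _ _ (cayley_inv_y_pos a Ha) Hr).
  do 4 eexists. split; [exact H|]. unfold pdisk_in_box. repeat split; apply Rle_refl.
Qed.

Lemma pdisks_in_common_box (z : C) (r0 r1 : R) (l : list C) :
  in_disk z -> 0 < r0 < 1 -> 0 < r1 < 1 -> (forall w, In w l -> in_disk w) ->
  exists X1 X2 Y1 Y2, 0 < Y1 /\ pdisk_in_box z r0 X1 X2 Y1 Y2 /\
    forall w, In w l -> pdisk_in_box w r1 X1 X2 Y1 Y2.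
Proof.
  intros Hz Hr0 Hr1. induction l as [|w l IH]; intros Hl.
  - destruct (pdisk_in_some_box z r0 Hz Hr0) as (X1 & X2 & Y1 & Y2 & HY & Hbox).
    exists X1, X2, Y1, Y2. split; [exact HY | split; [exact Hbox | intros w []]].
  - destruct IH as (X1 & X2 & Y1 & Y2 & HY & Hzbox & Hlbox); [intros u Hu; apply Hl; now right|].
    destruct (pdisk_in_some_box w r1 (Hl w (or_introl eq_refl)) Hr1)
      as (X1' & X2' & Y1' & Y2' & HY' & Hwbox).
    exists (Rmin X1 X1'), (Rmax X2 X2'), (Rmin Y1 Y1'), (Rmax Y2 Y2').
    split; [now apply Rmin_glb_lt|].
    assert (Hwiden : forall a r, pdisk_in_box a r X1 X2 Y1 Y2 ->
              pdisk_in_box a r (Rmin X1 X1') (Rmax X2 X2') (Rmin Y1 Y1') (Rmax Y2 Y2')).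
    { intros a r. apply pdisk_in_box_widen; auto using Rmin_l, Rmax_l. }
    split; [auto|]. intros u [<- | Hu]; [|auto].
    revert Hwbox. apply pdisk_in_box_widen; auto using Rmin_r, Rmax_r.
Qed.

Lemma hyperbolic_masses (z : C) (r0 r1 : R) (l : list C) :
  in_disk z -> 0 < r0 < 1 -> 0 < r1 < 1 -> (forall w, In w l -> in_disk w) ->
  exists X1 X2 Y1 Y2, X1 <= X2 /\ 0 < Y1 <= Y2 /\
    is_RInt2 (fun x y => indic (pdisk z r0 (cayley x y)) / y ^ 2) X1 X2 Y1 Y2 (harea r0) /\
    is_RInt2 (fun x y => sumf l (fun w => indic (pdisk w r1 (cayley x y))) / y ^ 2)
      X1 X2 Y1 Y2 (INR (length l) * harea r1).
Proof.
  intros Hz Hr0 Hr1 Hl.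
  destruct (pdisks_in_common_box z r0 r1 l Hz Hr0 Hr1 Hl) as (X1 & X2 & Y1 & Y2 & HY & Hzbox & Hlbox).
  exists X1, X2, Y1, Y2.
  pose proof (hradius_pos _ _ (cayley_inv_y_pos z Hz) Hr0).
  pose proof Hzbox as (HX1 & HX2 & HY1 & HY2).
  split; [lra|]. split; [lra|]. split; [now apply is_RInt2_pdisk|].
  rewrite <- sumf_const. eapply is_RInt2_ext; [| lra |].
  - intros x y _. apply sumf_div.
  - apply is_RInt2_sumf. intros w Hw. apply is_RInt2_pdisk; auto.
Qed.

Lemma harea_le_count (z : C) (r0 r1 : R) (l : list C) :
  in_disk z -> 0 < r0 < 1 -> 0 < r1 < 1 -> (forall w, In w l -> in_disk w) ->
  (forall p, pdisk z r0 p -> exists w, In w l /\ pdisk w r1 p) ->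
  harea r0 <= INR (length l) * harea r1.
Proof.
  intros Hz Hr0 Hr1 Hl Hcov.
  destruct (hyperbolic_masses z r0 r1 l Hz Hr0 Hr1 Hl) as (X1 & X2 & Y1 & Y2 & HX & HY & Hm0 & Hm1).
  apply (is_RInt2_le _ _ X1 X2 Y1 Y2 _ _ HX ltac:(lra) Hm0 Hm1).
  intros x y _ Hy. apply Rmult_le_compat_r.
  - apply Rlt_le, Rinv_0_lt_compat, pow_lt. lra.
  - apply indic_le_sumf, Hcov.
Qed.

Lemma count_le_harea (z : C) (r0 r1 : R) (l : list C) :
  in_disk z -> 0 < r0 < 1 -> 0 < r1 < 1 -> (forall w, In w l -> in_disk w) -> NoDup l ->
  (forall w p, In w l -> pdisk w r1 p -> pdisk z r0 p) ->
  (forall u v p, In u l -> In v l -> u <> v -> pdisk u r1 p -> ~ pdisk v r1 p) ->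
  INR (length l) * harea r1 <= harea r0.
Proof.
  intros Hz Hr0 Hr1 Hl Hnd Hsub Hdisj.
  destruct (hyperbolic_masses z r0 r1 l Hz Hr0 Hr1 Hl) as (X1 & X2 & Y1 & Y2 & HX & HY & Hm0 & Hm1).
  apply (is_RInt2_le _ _ X1 X2 Y1 Y2 _ _ HX ltac:(lra) Hm1 Hm0).
  intros x y _ Hy. apply Rmult_le_compat_r.
  - apply Rlt_le, Rinv_0_lt_compat, pow_lt. lra.
  - apply sumf_indic_le; eauto.
Qed.

Theorem lemma4p2 (z : C) (R0 L : R) (zs : list C) :
  in_disk z -> 0 < R0 < 1 -> 0 < L < 1 ->
  NoDup zs ->
  is_chain L (pdisk z R0) (fun w => In w zs) ->
  R0 ^ 2 / (1 - R0 ^ 2) * ((1 - L ^ 2) / L ^ 2) <= INR (length zs) /\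
  INR (length zs) <= (2 * R0 + L) ^ 2 / (1 - R0 ^ 2) * (1 / L ^ 2).
Proof.
  intros Hz HR HL Hnd Hchain. pose proof Hchain as (Hsub & Hsep & _).
  assert (Hzs : forall w, In w zs -> in_disk w) by (intros w Hw; apply (Hsub w Hw)).
  assert (HL2 : 0 < L / 2 < 1) by lra.
  split.
  - rewrite <- harea_div by assumption. apply Rle_div_l; [now apply harea_pos|].
    apply (harea_le_count z); auto. intros p Hp.
    destruct (chain_covers L _ _ p (proj1 HL) Hchain Hp) as (w & Hw & Hpw).
    exists w. split; [exact Hw|]. split; [apply Hp | exact Hpw].
  - rewrite <- harea_mobius_add_half_div by assumption. apply Rle_div_r; [now apply harea_pos|].
    apply (count_le_harea z); auto using mobius_add_bounds.
    + intros w p Hw. apply pdisk_subset; auto; [apply (Hsub w Hw) | lra | lra].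
    + intros u v p Hu Hv Huv. apply pdisk_half_disjoint; auto.
Qed.
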